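(* Let $0<s<1$. Then $\sigma_{ap}(T_{s^z})\subseteq\{s^w:\mathrm{Re}\,w=\tfrac m2,\ m=-1,0,1,2,\dots\}\cup\{0\}$.
   Context: $\mu$ is the measure on $\Omega=\{\mathrm{Re}\,z\ge-\tfrac12\}$ given by $d\mu=\sum_{n=-1}^\infty \frac{|\Gamma(\frac n2+iy+1)|^2}{2\pi(n+1)!}\,dy\,d\delta_{n/2}(x)$; $H^2(\mu)$ is the closed span of $\{a^z:0<a\le1\}$ in $L^2(\mu)$; $T_{s^z}$ is multiplication by $s^z=e^{z\ln s}$ on $H^2(\mu)$; $\sigma_{ap}$ denotes the approximate point spectrum. *)

From HB Require Import structures.
From mathcomp Require Import all_boot all_order all_algebra.
From mathcomp Require Import all_classical all_reals all_analysis.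
From mathcomp Require Import complex.
Set Implicit Arguments. Unset Strict Implicit. Unset Printing Implicit Defensive.
Import Order.TTheory GRing.Theory Num.Theory.
Import numFieldNormedType.Exports.
Local Open Scope classical_set_scope.
Local Open Scope ring_scope.

Section Defs.
Variable R : realType.

(* complex power a^z := e^{z ln a} for real a > 0, written out:
   e^{z ln a} = e^{complex.Re z ln a} (cos (complex.Im z ln a) + i sin (complex.Im z ln a)) *)
Definition cpow (a : R) (z : R[i]) : R[i] :=
  Complex (expR (complex.Re z * ln a) * cos (complex.Im z * ln a))
          (expR (complex.Re z * ln a) * sin (complex.Im z * ln a)).

Definition sqmod (z : R[i]) : R := complex.Re z ^+ 2 + complex.Im z ^+ 2.

(* Euler Gamma at a +iy (a > 0):  Gamma(a+iy) = int_0^oo t^(a+iy-1) e^(-t) dt *)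
Definition GammaC (a y : R) : R[i] :=
  Complex
    (Rintegral lebesgue_measure `]0%R, +oo[
       (fun t => t `^ (a - 1) * expR (- t) * cos (y * ln t)))
    (Rintegral lebesgue_measure `]0%R, +oo[
       (fun t => t `^ (a - 1) * expR (- t) * sin (y * ln t))).

(* The measure mu lives on the lines complex.Re z = n/2, n = -1,0,1,...  We index the
   line n/2 by k = n+1 : nat.  A function on supp(mu) is thus f : nat -> R -> R[i],
   f k y = f((k-1)/2 + i y). *)
Definition zpt (k : nat) (y : R) : R[i] := Complex ((k%:R - 1) / 2) y.

(* density of mu on the line k: |Gamma(n/2 + iy + 1)|^2 / (2 pi (n+1)!) *)
Definition weight (k : nat) (y : R) : R :=
  sqmod (GammaC ((k%:R + 1) / 2) y) / (2 * pi * (k`!)%:R).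

Definition fn := nat -> R -> R[i].

Definition L2norm2 (f : fn) : \bar R :=
  (\sum_(0 <= k <oo)
     \int[lebesgue_measure]_(y in [set: R]) (sqmod (f k y) * weight k y)%:E)%E.

Definition measurable_fn (f : fn) : Prop :=
  forall k, measurable_fun [set: R] (fun y => complex.Re (f k y)) /\
            measurable_fun [set: R] (fun y => complex.Im (f k y)).

Definition inL2 (f : fn) : Prop := measurable_fn f /\ (L2norm2 f < +oo)%E.

Definition powfn (a : R) : fn := fun k y => cpow a (zpt k y).

Definition comb (l : seq (R[i] * R)) : fn :=
  fun k y => \sum_(p <- l) p.1 * powfn p.2 k y.

(* H^2(mu): closure in L^2(mu) of span {a^z : 0 < a <= 1} *)
Definition H2 (f : fn) : Prop :=
  inL2 f /\
  forall e : R, 0 < e -> exists l : seq (R[i] * R),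
    all (fun p => (0 < p.2) && (p.2 <= 1)) l /\
    (L2norm2 (fun k y => (f k y - comb l k y)%R) < e%:E)%E.

Definition Tmul (s : R) (f : fn) : fn := fun k y => powfn s k y * f k y.

Definition sigma_ap (s : R) (lam : R[i]) : Prop :=
  exists fs : nat -> fn,
    (forall j, H2 (fs j) /\ L2norm2 (fs j) = 1%E) /\
    ((fun j => L2norm2 (fun k y => (Tmul s (fs j) k y - lam * fs j k y)%R))
       @ \oo --> 0%E).

End Defs.

(* On the line Re z = (k-1)/2 the multiplier s^z has constant modulus
   s^((k-1)/2), and these moduli decrease to 0.  If |lam| is none of them
   (and lam <> 0), then |lam| stays at positive distance d from all of them, so
   |s^z - lam| >= d on the support of mu and ||(T - lam) f|| >= d ||f||: lam is
   not an approximate eigenvalue.  If |lam| = s^((k-1)/2), writing lam in polar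
   form exhibits it as s^w with Re w = (k-1)/2. *)
From HB Require Import structures.
From mathcomp Require Import all_boot all_order all_algebra.
From mathcomp Require Import all_classical all_reals all_analysis.
From mathcomp Require Import complex.
From mathcomp Require Import ring lra.
Import Order.TTheory GRing.Theory Num.Theory.
Import Normc HBNNSimple.
Set Implicit Arguments. Unset Strict Implicit.
Local Open Scope ring_scope.
Local Open Scope classical_set_scope.

Section NonnegativeIntegral.
Context {d : measure_display} {T : measurableType d} {R : realType}.
Variable mu : {measure set T -> \bar R}.
Local Open Scope ereal_scope.

Lemma ge0_le_integral_scale (f g : T -> \bar R) (c : R) : (0 < c)%R ->
  (forall x, 0 <= f x) -> (forall x, c%:E * f x <= g x) ->
  c%:E * \int[mu]_x f x <= \int[mu]_x g x.
Proof.
move=> c_gt0 f_ge0 cfg.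
have g_ge0 x : 0 <= g x.
  by apply: le_trans (cfg x); rewrite mule_ge0 // lee_fin ltW.
rewrite !ge0_integralTE // -ereal_sup_pZl //.
apply: ge_ereal_sup => _ [_ [h hf <-] <-]; apply: ereal_sup_ubound => /=.
exists (scale_nnsfun h (ltW c_gt0)); last exact: sintegralrM.
move=> x /=; apply: le_trans (cfg x); rewrite EFinM.
by apply: lee_wpmul2l; [rewrite lee_fin ltW | apply: hf].
Qed.

End NonnegativeIntegral.

Section ComplexModulus.
Variable R : realType.
Implicit Types (u v z : R[i]) (a : R).

Lemma sqmod_normc z : sqmod z = normc z ^+ 2.
Proof. by case: z => x y; rewrite /sqmod sqr_sqrtr // addr_ge0 ?sqr_ge0. Qed.

Lemma normc_ge0 z : 0 <= normc z.
Proof. by case: z => x y; apply: sqrtr_ge0. Qed.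

Lemma normc_gt0 z : z != 0 -> 0 < normc z.
Proof.
by move=> z0; rewrite lt_def normc_ge0 andbT; apply: contra z0 => /eqP/eq0_normc->.
Qed.

Lemma sqmod_ge0 z : 0 <= sqmod z.
Proof. by rewrite sqmod_normc sqr_ge0. Qed.

Lemma sqmodM u v : sqmod (u * v) = sqmod u * sqmod v.
Proof. by rewrite !sqmod_normc normcM exprMn. Qed.

Lemma sqmod_sub_ge u v : (normc u - normc v) ^+ 2 <= sqmod (u - v).
Proof.
have tri (x y : R[i]) : normc x - normc y <= normc (x - y).
  by rewrite lerBlDr -{1}(subrK y x); apply: le_normcD.
have := tri u v; have := tri v u; rewrite -[normc (v - u)]normcN opprB sqmod_normc.
by have := normc_ge0 (u - v); nra.
Qed.

Lemma normc_cpow a z : normc (cpow a z) = expR (complex.Re z * ln a).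
Proof.
rewrite /cpow /= !exprMn -mulrDr cos2Dsin2 mulr1 sqrtr_sqr.
by rewrite ger0_norm ?expR_ge0.
Qed.

Lemma normc_polar z :
  exists t, z = Complex (normc z * cos t) (normc z * sin t).
Proof.
case: (eqVneq z 0) => [->|/normc_gt0]; first by exists 0; rewrite normc0 !mul0r.
case: z => a b; rewrite [normc _]/=; set r := Num.sqrt _ => r_gt0.
have r2 : r ^+ 2 = a ^+ 2 + b ^+ 2 by rewrite sqr_sqrtr // addr_ge0 ?sqr_ge0.
set x := a / r.
have ax : a = r * x by rewrite /x mulrC divfK // gt_eqF.
have x_bnd : -1 <= x <= 1.
  have : x ^+ 2 <= 1.
    by rewrite /x expr_div_n ler_pdivrMr ?exprn_gt0 // mul1r r2 lerDl sqr_ge0.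
  by move=> ?; apply/andP; split; nra.
have sqrt_x : Num.sqrt (1 - x ^+ 2) = `|b| / r.
  have -> : 1 - x ^+ 2 = (b / r) ^+ 2.
    by rewrite /x !expr_div_n r2; field; rewrite -r2 expf_neq0 // gt_eqF.
  by rewrite sqrtr_sqr normf_div (gtr0_norm r_gt0).
have bx : `|b| = r * (`|b| / r) by rewrite mulrC divfK // gt_eqF.
case: (leP 0 b) => b0.
  exists (acos x); rewrite acosK ?sin_acos // sqrt_x -bx ger0_norm //.
  by rewrite -ax.
exists (- acos x); rewrite cosN sinN acosK ?sin_acos // sqrt_x mulrN -bx.
by rewrite ltr0_norm // opprK -ax.
Qed.

Lemma cpowP a (x : R) lam : ln a != 0 ->
  normc lam = expR (x * ln a) -> exists2 w, complex.Re w = x & lam = cpow a w.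
Proof.
move=> lna0 lam_mod; have [t ->] := normc_polar lam.
exists (Complex x (t / ln a)) => //.
by rewrite /cpow /= divfK // lam_mod.
Qed.

End ComplexModulus.

Section Separation.
Variable R : realType.
Variables (u : nat -> R) (rho : R).
Hypothesis u_noninc : nonincreasing_seq u.
Hypothesis u_below : exists N, u N < rho.
Hypothesis u_neq : forall k, u k != rho.

(* Let K be the first index with u K < rho: beyond K the values stay below
   u K, before K they stay above u (K-1) > rho. *)
Lemma nonincreasing_seq_sep : exists2 e, 0 < e & forall k, e <= `|u k - rho|.
Proof.
case: (ex_minnP u_below) => K uK Kmin.
have below k : (K <= k)%N -> rho - u K <= `|u k - rho|.
  by move=> /u_noninc ukK; rewrite distrC ger0_norm; lra.
case: K uK Kmin below => [|K] uK Kmin below.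
  by exists (rho - u 0%N) => [|k]; rewrite ?subr_gt0 ?below.
have uK_gt : rho < u K.
  rewrite lt_neqAle eq_sym u_neq leNgt /=; apply/negP => /Kmin.
  by rewrite ltnn.
exists (Num.min (rho - u K.+1) (u K - rho)); first by rewrite lt_min; lra.
move=> k; case: (leqP K.+1 k) => Kk; rewrite ge_min; first by rewrite below.
have ukK := u_noninc (Kk : (k <= K)%N).
by rewrite ger0_norm ?orbT; lra.
Qed.

End Separation.

Section Multiplier.
Variables (R : realType) (s : R).

Definition powmod (k : nat) : R := expR ((k%:R - 1) / 2 * ln s).

Lemma normc_powfn k y : normc (powfn s k y) = powmod k.
Proof. by rewrite /powfn normc_cpow. Qed.

Hypotheses (s_gt0 : 0 < s) (s_lt1 : s < 1).

Lemma ln_s_lt0 : ln s < 0.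
Proof. by rewrite ln_lt0 // s_gt0 s_lt1. Qed.

Lemma powmod_nonincreasing : nonincreasing_seq powmod.
Proof.
move=> k l kl; rewrite /powmod ler_expR.
have := ln_s_lt0; have : (k%:R <= l%:R :> R) by rewrite ler_nat.
nra.
Qed.

Lemma powmod_lt (rho : R) : 0 < rho -> exists N, powmod N < rho.
Proof.
move=> rho_gt0; set q := ln rho / ln s.
have qs : q * ln s = ln rho by rewrite /q divfK // lt_eqF ?ln_s_lt0.
exists (Num.truncn (1 + 2 * q)).+1.
rewrite /powmod -[X in _ < X](@lnK _ rho) ?posrE // ltr_expR.
have := truncnS_gt (1 + 2 * q); have := ln_s_lt0; set N := _%:R.
nra.
Qed.

End Multiplier.

Section ApproximatePointSpectrum.
Variable R : realType.

Lemma weight_ge0 k y : (0 <= weight (R:=R) k y)%R.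
Proof. by rewrite divr_ge0 ?sqmod_ge0 // !mulr_ge0 // ltW ?pi_gt0. Qed.

Local Open Scope ereal_scope.

Lemma L2norm2_le_scale (c : R) (f g : fn R) : (0 < c)%R ->
  (forall k y, c * sqmod (f k y) <= sqmod (g k y))%R ->
  c%:E * L2norm2 f <= L2norm2 g.
Proof.
move=> c_gt0 cfg.
have int_ge0 (h : fn R) k : 0 <= \int[lebesgue_measure]_y
    (sqmod (h k y) * weight k y)%:E.
  by apply: integral_ge0 => y _; rewrite lee_fin mulr_ge0 ?sqmod_ge0 ?weight_ge0.
rewrite /L2norm2 -nneseriesZl; last by move=> k _; apply: int_ge0.
apply: lee_nneseries => [k _ _|k _]; first by rewrite mule_ge0 ?int_ge0 // lee_fin ltW.
apply: ge0_le_integral_scale => // y.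
  by rewrite lee_fin mulr_ge0 ?sqmod_ge0 ?weight_ge0.
by rewrite -EFinM lee_fin mulrA ler_wpM2r ?weight_ge0.
Qed.

Lemma sigma_apN_bounded_below (s : R) lam e : (0 < e)%R ->
  (forall k y, e <= sqmod (powfn s k y - lam))%R -> ~ sigma_ap s lam.
Proof.
move=> e_gt0 lam_far [fs [fs_unit fs_cvg]].
have : e%:E <= 0.
  apply: (cvge_to_ge fs_cvg); apply: nearW => j.
  rewrite -[e%:E]mule1 -(proj2 (fs_unit j)).
  apply: L2norm2_le_scale => // k y.
  by rewrite /Tmul -mulrBl sqmodM ler_wpM2r ?sqmod_ge0.
by rewrite lee_fin leNgt e_gt0.
Qed.

End ApproximatePointSpectrum.

Theorem mainTheorem5 (R : realType) (s : R) (hs0 : 0 < s) (hs1 : s < 1)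
  (lam : R[i]) :
  sigma_ap s lam ->
  lam = 0 \/ exists (w : R[i]) (m : nat), complex.Re w = (m%:R - 1) / 2 /\ lam = cpow s w.
Proof.
move=> lam_ap; case: (eqVneq lam 0) => [|lam0]; [by left | right].
case: (pselect (exists k, powmod s k = normc lam)) => [[k lam_mod]|lam_off].
  have [w Rew ->] := cpowP (ltr0_neq0 (ln_s_lt0 hs0 hs1)) (esym lam_mod).
  by exists w, k.
have [|e e_gt0 far] := nonincreasing_seq_sep (powmod_nonincreasing hs0 hs1)
  (powmod_lt hs0 hs1 (normc_gt0 lam0)).
  by move=> k; apply/eqP => eq_k; apply: lam_off; exists k.
exfalso; apply: (sigma_apN_bounded_below (e := e ^+ 2)) lam_ap => [|k y].
  by rewrite exprn_gt0.
rewrite (le_trans _ (sqmod_sub_ge _ _)) // normc_powfn.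
rewrite -[X in _ <= X]real_normK ?num_real //.
by rewrite ler_sqr ?nnegrE ?normr_ge0 ?(ltW e_gt0) ?far.
Qed.
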